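(* Let $J_0$ be a two-sided $p$-periodic Jacobi matrix with discriminant $\Delta_{J_0}$ and isospectral torus $\mathcal{T}_{J_0}$. Let $J$ be a two-sided (not a priori periodic) Jacobi matrix. Then $\Delta_{J_0}(J)=S^p+S^{-p}$ if and only if $J\in\mathcal{T}_{J_0}$, where $S$ is the right shift on $\ell^2(\mathbb{Z})$.
   Context: A two-sided Jacobi matrix is the bounded tridiagonal operator on $\ell^2(\mathbb{Z})$ with $J_{nn}=b_n\in\mathbb{R}$, $J_{n,n+1}=J_{n+1,n}=a_n>0$ ($\{a_n,b_n\}$ bounded). $J_0$ is $p$-periodic if its parameters are $p$-periodic. Its discriminant is the polynomial $\Delta_{J_0}(x)=\mathrm{Tr}(\Lambda_p(x)\cdots\Lambda_1(x))$, $\Lambda_n(x)=\frac1{a^{(0)}_n}\begin{pmatrix}x-b^{(0)}_n&-1\\(a^{(0)}_n)^2&0\end{pmatrix}$, of degree $p$; $\Delta_{J_0}(J)$ is this polynomial applied to the operator $J$. The isospectral torus $\mathcal{T}_{J_0}$ is the set of two-sided $p$-periodic Jacobi matrices whose discriminant equals $\Delta_{J_0}$ (equivalently, with the same spectrum as $J_0$). The right shift is $(Su)_n=u_{n-1}$. *)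

From HB Require Import structures.
From mathcomp Require Import all_boot all_order all_algebra.
From mathcomp Require Import reals.
Set Implicit Arguments. Unset Strict Implicit. Unset Printing Implicit Defensive.
Import Order.TTheory GRing.Theory Num.Theory.
Local Open Scope ring_scope.

(* A two-sided Jacobi matrix is given by its parameters a b : int -> R,
   J_{nn} = b n, J_{n,n+1} = J_{n+1,n} = a n > 0, {a_n, b_n} bounded. *)
Definition jacobi (R : realType) (a b : int -> R) : Prop :=
  (forall n, 0 < a n) /\ (exists M : R, forall n, `|a n| <= M /\ `|b n| <= M).

Definition periodic (R : realType) (p : nat) (a b : int -> R) : Prop :=
  forall n : int, a (n + p%:Z) = a n /\ b (n + p%:Z) = b n.

Definition Lambda (R : realType) (a b : int -> R) (n : int)
  : 'M[{poly R}]_2 :=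
  (a n)^-1%:P *: \matrix_(i < 2, j < 2)
     (if i == 0 then (if j == 0 then 'X - (b n)%:P else -1)
      else (if j == 0 then (a n ^+ 2)%:P else 0)).

Fixpoint monodromy (R : realType) (a b : int -> R) (k : nat)
  : 'M[{poly R}]_2 :=
  match k with
  | 0 => 1%:M
  | k'.+1 => Lambda a b (k'.+1)%:Z *m monodromy a b k'
  end.

Definition discriminant (R : realType) (p : nat) (a b : int -> R)
  : {poly R} := \tr (monodromy a b p).

Definition jac_apply (R : realType) (a b : int -> R) (u : int -> R)
  : int -> R :=
  fun n => a (n - 1) * u (n - 1) + b n * u n + a n * u (n + 1).

Definition jac_pow (R : realType) (a b : int -> R) (k : nat)
  (u : int -> R) : int -> R := iter k (jac_apply a b) u.

Definition poly_apply (R : realType) (a b : int -> R) (P : {poly R})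
  (u : int -> R) : int -> R :=
  fun n => \sum_(i < size P) P`_i * jac_pow a b i u n.

Definition shift_pow (R : realType) (k : int) (u : int -> R) : int -> R :=
  fun n => u (n - k).

Definition l2 (R : realType) (u : int -> R) : Prop :=
  exists M : R, forall N : nat,
    \sum_(i < (N.*2).+1) u (i%:Z - N%:Z) ^+ 2 <= M.

Definition iso_torus (R : realType) (p : nat) (a0 b0 a b : int -> R)
  : Prop :=
  jacobi a b /\ periodic p a b /\ discriminant p a b = discriminant p a0 b0.

From HB Require Import structures.
From mathcomp Require Import all_boot all_order all_algebra.
From mathcomp Require Import reals.
From mathcomp Require Import ring zify.
From Stdlib Require Import FunctionalExtensionality.
Set Implicit Arguments. Unset Strict Implicit. Unset Printing Implicit Defensive.
Import Order.TTheory GRing.Theory Num.Theory.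
Local Open Scope ring_scope.

(* For p-periodic J, the transfer matrix T_n = Lambda_(n+p-1) ... Lambda_n, with x read
   as J, carries the state (u_n, a_(n-1) u_(n-1)) of an arbitrary sequence u to its state
   at n + p, and its inverse carries it to the state at n - p.  As det T_n = 1, that
   inverse is adj T_n, and T_n + adj T_n = (tr T_n) I.  By periodicity tr T_n does not
   depend on n, so it is the discriminant, and Delta(J) u = S^p u + S^-p u.
   Conversely, test the identity on the unit vectors delta_m.  The lowest nonzero entry of
   J^k delta_m is a product of k consecutive a's, and J^(k+1) delta_m adds there a window
   sum of k + 1 consecutive b's.  Reading off the two top coefficients of Delta_J0 on every
   window forces a and b to be p-periodic; then Delta_J - Delta_J0 annihilates every
   delta_m, hence vanishes. *)

Lemma shift_invariant_const (T : Type) (f : int -> T) :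
  (forall n, f (n + 1) = f n) -> forall n, f n = f 0.
Proof.
move=> f_shift; elim/int_ind => [//|k IH|k IH].
  by rewrite -IH; have -> : k.+1%:Z = k%:Z + 1 by lia; rewrite f_shift.
by rewrite -IH; have -> : - k%:Z = - k.+1%:Z + 1 by lia; rewrite f_shift.
Qed.

Lemma big_window_recl (T : Type) (idx : T) (op : T -> T -> T) (f : int -> T) c k :
  \big[op/idx]_(j < k.+1) f (c + j%:Z) = op (f c) (\big[op/idx]_(j < k) f (c + 1 + j%:Z)).
Proof.
rewrite big_ord_recl addr0; congr op; apply: eq_bigr => j _.
by rewrite -addrA.
Qed.

Section Windows.
Variable R : fieldType.
Implicit Types (f : int -> R) (c : int).

Lemma window_sum_periodic f k c :
  \sum_(j < k.+1) f (c + j%:Z) = \sum_(j < k.+1) f (c + 1 + j%:Z) ->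
  f (c + k.+1%:Z) = f c.
Proof.
rewrite big_window_recl big_ord_recr /= addrC => /addIr ->.
by rewrite -addrA.
Qed.

Lemma window_prod_periodic f k c : (forall n, f n != 0) ->
  \prod_(j < k.+1) f (c + j%:Z) = \prod_(j < k.+1) f (c + 1 + j%:Z) ->
  f (c + k.+1%:Z) = f c.
Proof.
move=> f_neq0; have inner_neq0 : \prod_(j < k) f (c + 1 + j%:Z) != 0.
  by apply/prodf_neq0 => j _.
rewrite big_window_recl big_ord_recr /= mulrC => /(mulfI inner_neq0) ->.
by rewrite -addrA.
Qed.

End Windows.

Lemma ord2P (i : 'I_2) : i = 0 \/ i = 1.
Proof. by case: i => [[|[|//]] ?]; [left|right]; apply: val_inj. Qed.

Lemma lift0_ord2 : lift ord0 ord0 = 1 :> 'I_2.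
Proof. exact: val_inj. Qed.

Lemma lift1_ord2 : lift 1 ord0 = 0 :> 'I_2.
Proof. exact: val_inj. Qed.

Section Matrix22.
Variable K : comNzRingType.
Implicit Types A B : 'M[K]_2.

Lemma mulmx2E A B i j : (A *m B) i j = A i 0 * B 0 j + A i 1 * B 1 j.
Proof. by rewrite mxE !big_ord_recl big_ord0 addr0 lift0_ord2. Qed.

Lemma mxtrace2E A : \tr A = A 0 0 + A 1 1.
Proof. by rewrite /mxtrace !big_ord_recl big_ord0 addr0 lift0_ord2. Qed.

Lemma det_mx22 A : \det A = A 0 0 * A 1 1 - A 0 1 * A 1 0.
Proof.
rewrite (expand_det_row _ 0) !big_ord_recl big_ord0 /cofactor !det_mx11 !mxE.
by rewrite lift0_ord2 lift1_ord2 /=; ring.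
Qed.

Lemma add_adj_mx22 A : A + \adj A = (\tr A)%:M.
Proof.
apply/matrixP => i j; rewrite mxtrace2E !mxE /cofactor det_mx11 !mxE.
by case: (ord2P i) => ->; case: (ord2P j) => ->;
  rewrite /= ?lift0_ord2 ?lift1_ord2 /=; ring.
Qed.

End Matrix22.

Section PolyApply.
Variables (R : realType) (a b : int -> R).
Local Notation J := (jac_apply a b).
Local Notation pa := (poly_apply a b).
Implicit Types (P Q : {poly R}) (u : int -> R) (n : int).

Lemma poly_apply_widen N P u n : (size P <= N)%N ->
  pa P u n = \sum_(i < N) P`_i * jac_pow a b i u n.
Proof.
move=> le_PN; rewrite /poly_apply (big_ord_widen N (fun i => P`_i * jac_pow a b i u n) le_PN).
rewrite big_mkcond /=.
apply: eq_bigr => i _; case: ltnP => // le_Pi.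
by rewrite nth_default // mul0r.
Qed.

Lemma poly_apply0 u n : pa 0 u n = 0.
Proof. by rewrite /poly_apply size_poly0 big_ord0. Qed.

Lemma poly_applyC c u n : pa c%:P u n = c * u n.
Proof. by rewrite (@poly_apply_widen 1) ?size_polyC_leq1 // big_ord1 coefC. Qed.

Lemma poly_applyD P Q u n : pa (P + Q) u n = pa P u n + pa Q u n.
Proof.
pose N := maxn (size P) (size Q).
rewrite (@poly_apply_widen N (P + Q)) ?(leq_trans (size_polyD _ _)) //.
rewrite (@poly_apply_widen N P) ?leq_maxl // (@poly_apply_widen N Q) ?leq_maxr //.
by rewrite -big_split; apply: eq_bigr => i _; rewrite coefD mulrDl.
Qed.

Lemma poly_applyZ c P u n : pa (c *: P) u n = c * pa P u n.
Proof.
rewrite (@poly_apply_widen (size P) (c *: P)) ?size_scale_leq // mulr_sumr.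
by apply: eq_bigr => i _; rewrite coefZ mulrA.
Qed.

Lemma poly_applyN P u n : pa (- P) u n = - pa P u n.
Proof. by rewrite -scaleN1r poly_applyZ mulN1r. Qed.

Lemma poly_applyB P Q u n : pa (P - Q) u n = pa P u n - pa Q u n.
Proof. by rewrite poly_applyD poly_applyN. Qed.

Lemma poly_applyCM c P u n : pa (c%:P * P) u n = c * pa P u n.
Proof. by rewrite mul_polyC poly_applyZ. Qed.

Lemma poly_applyXM P u n : pa ('X * P) u n = pa P (J u) n.
Proof.
rewrite (@poly_apply_widen (size P).+1 ('X * P)); last first.
  by rewrite (leq_trans (size_polyMleq _ _)) // size_polyX.
rewrite big_ord_recl coefXM mul0r add0r.
by apply: eq_bigr => i _; rewrite coefXM /jac_pow -iterSr.
Qed.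

End PolyApply.

Section Sizes.
Variables (R : realType) (a b : int -> R).

Lemma size_Lambda m i j : (size (Lambda a b m i j) <= 2)%N.
Proof.
rewrite !mxE mul_polyC (leq_trans (size_scale_leq _ _)) //.
case: (ord2P i) => ->; case: (ord2P j) => -> /=.
- by rewrite size_XsubC.
- by rewrite size_polyN size_poly1.
- exact: leq_trans (size_polyC_leq1 _) _.
- by rewrite size_poly0.
Qed.

Lemma size_monodromy k i j : (size (monodromy a b k i j) <= k.+1)%N.
Proof.
elim: k i j => [|k IH] i j.
  by rewrite mxE; case: (i == j); rewrite ?size_poly1 ?size_poly0.
rewrite /= mulmx2E (leq_trans (size_polyD _ _)) // geq_max.
have size_term l : (size (Lambda a b k.+1%:Z i l * monodromy a b k l j)%R <= k.+2)%N.
  rewrite (leq_trans (size_polyMleq _ _)) // -subn1 leq_subLR.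
  exact: leq_add (size_Lambda _ _ _) (IH _ _).
by rewrite !size_term.
Qed.

Lemma size_discriminant p : (size (discriminant p a b) <= p.+1)%N.
Proof.
rewrite /discriminant mxtrace2E (leq_trans (size_polyD _ _)) //.
by rewrite geq_max !size_monodromy.
Qed.

End Sizes.

Section Transfer.
Variables (R : realType) (a b : int -> R).
Hypothesis a_neq0 : forall n, a n != 0.
Local Notation J := (jac_apply a b).
Local Notation pa := (poly_apply a b).
Local Notation Lambda := (Lambda a b).
Implicit Types (M : 'M[{poly R}]_2) (u : int -> R) (m n : int).

Definition Lambda_inv m : 'M[{poly R}]_2 :=
  (a m)^-1%:P *: \matrix_(i < 2, j < 2)
     (if i == 0 then (if j == 0 then 0 else 1)
      else (if j == 0 then - (a m ^+ 2)%:P else 'X - (b m)%:P)).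

Lemma polyC_mulVa m : (a m)^-1%:P * (a m)%:P = 1.
Proof. by rewrite -polyCM mulVf. Qed.

Lemma Lambda_invL m : Lambda_inv m *m Lambda m = 1%:M.
Proof.
have aVa := polyC_mulVa m.
apply/matrixP => i j; rewrite mulmx2E !mxE polyC_exp.
by case: (ord2P i) => ->; case: (ord2P j) => -> /=;
  first [ring | transitivity (((a m)^-1%:P * (a m)%:P) ^+ 2); [ring | by rewrite aVa expr1n]].
Qed.

Lemma Lambda_invR m : Lambda m *m Lambda_inv m = 1%:M.
Proof. exact/mulmx1C/Lambda_invL. Qed.

Lemma det_Lambda m : \det (Lambda m) = 1.
Proof.
rewrite det_mx22 !mxE polyC_exp /=.
transitivity (((a m)^-1%:P * (a m)%:P) ^+ 2); [ring | by rewrite polyC_mulVa expr1n].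
Qed.

Fixpoint transfer n (k : nat) : 'M[{poly R}]_2 :=
  if k is k'.+1 then Lambda (n + k'%:Z) *m transfer n k' else 1%:M.

Fixpoint transfer_back n (k : nat) : 'M[{poly R}]_2 :=
  if k is k'.+1 then Lambda_inv (n - k'.+1%:Z) *m transfer_back n k' else 1%:M.

Lemma monodromyE k : monodromy a b k = transfer 1 k.
Proof. by elim: k => //= k ->; congr (Lambda _ *m _); lia. Qed.

Lemma transferSr n k : transfer n k.+1 = transfer (n + 1) k *m Lambda n.
Proof.
elim: k => [|k IH]; first by rewrite /= mul1mx mulmx1 addr0.
rewrite -[transfer n k.+2]/(Lambda _ *m transfer n k.+1) IH /= mulmxA.
by have -> : n + k.+1%:Z = n + 1 + k%:Z by lia.
Qed.

Lemma transfer_backSr n k :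
  transfer_back n k.+1 = transfer_back (n - 1) k *m Lambda_inv (n - 1).
Proof.
elim: k => [|k IH].
  by rewrite /= mul1mx mulmx1; have -> : n - 1%:Z = n - 1 by lia.
rewrite -[transfer_back n k.+2]/(Lambda_inv _ *m transfer_back n k.+1) IH /= mulmxA.
by have -> : n - k.+2%:Z = n - 1 - k.+1%:Z by lia.
Qed.

Lemma transfer_backK n k : transfer_back (n + k%:Z) k *m transfer n k = 1%:M.
Proof.
elim: k => [|k IH]; first by rewrite /= mulmx1.
rewrite transfer_backSr /= mulmxA -(mulmxA _ (Lambda_inv _)).
have -> : n + k.+1%:Z - 1 = n + k%:Z by lia.
by rewrite Lambda_invL mulmx1.
Qed.

Lemma det_transfer n k : \det (transfer n k) = 1.
Proof. by elim: k => [|k IH]; rewrite /= ?det1 // det_mulmx det_Lambda IH mulr1. Qed.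

Definition state m u (i : 'I_2) : R :=
  if i == 0 then u m else a (m - 1) * u (m - 1).

(* M(J) applied to the state at n: the variable of the polynomial entries acts as J on u. *)
Definition mx_state n M u (i : 'I_2) : R :=
  pa (M i 0) u n + a (n - 1) * pa (M i 1) u (n - 1).

Definition Lambda_step m (phi : (int -> R) -> 'I_2 -> R) u (i : 'I_2) : R :=
  if i == 0 then (a m)^-1 * (phi (J u) 0 - b m * phi u 0 - phi u 1)
  else a m * phi u 0.

Definition Lambda_inv_step m (phi : (int -> R) -> 'I_2 -> R) u (i : 'I_2) : R :=
  if i == 0 then (a m)^-1 * phi u 1
  else (a m)^-1 * (phi (J u) 1 - b m * phi u 1) - a m * phi u 0.

Lemma state_Lambda_step m : state (m + 1) =2 Lambda_step m (state m).
Proof.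
move=> u i; rewrite /state /Lambda_step /jac_apply addrK.
case: (ord2P i) => -> //=; field; exact: a_neq0.
Qed.

Lemma state_Lambda_inv_step m : state m =2 Lambda_inv_step m (state (m + 1)).
Proof.
move=> u i; rewrite /state /Lambda_inv_step /jac_apply addrK.
case: (ord2P i) => -> //=; field; exact: a_neq0.
Qed.

Lemma mx_state_Lambda n m M : mx_state n (Lambda m *m M) =2 Lambda_step m (mx_state n M).
Proof.
move=> u i; rewrite /mx_state /Lambda_step !mulmx2E !mxE.
case: (ord2P i) => -> /=; rewrite -!mulrA ?mulrBl ?mulN1r ?mul0r ?mulr0 ?addr0.
  rewrite !poly_applyD !poly_applyCM !poly_applyN !poly_applyB !poly_applyXM.
  by rewrite !poly_applyCM; ring.
by rewrite !poly_applyCM; field; exact: a_neq0.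
Qed.

Lemma mx_state_Lambda_inv n m M :
  mx_state n (Lambda_inv m *m M) =2 Lambda_inv_step m (mx_state n M).
Proof.
move=> u i; rewrite /mx_state /Lambda_inv_step !mulmx2E !mxE.
case: (ord2P i) => -> /=; rewrite -!mulrA ?mulrBl ?mulNr ?mul1r ?mul0r ?mulr0 ?add0r.
  by rewrite !poly_applyCM; ring.
rewrite !poly_applyD !poly_applyCM !poly_applyN !poly_applyB !poly_applyXM !poly_applyCM.
field; exact: a_neq0.
Qed.

Lemma mx_state1 n : mx_state n 1%:M =2 state n.
Proof.
move=> u i; rewrite /mx_state /state !mxE.
by case: (ord2P i) => -> /=;
  rewrite mulr1n mulr0n -polyC1 poly_applyC poly_apply0 ?mulr0 ?addr0 ?add0r mul1r.
Qed.

Lemma mx_stateD n M N u i : mx_state n (M + N) u i = mx_state n M u i + mx_state n N u i.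
Proof. by rewrite /mx_state !mxE !poly_applyD; ring. Qed.

Lemma mx_state_scalar n P u : mx_state n P%:M u 0 = pa P u n.
Proof. by rewrite /mx_state !mxE /= poly_apply0 mulr0 addr0. Qed.

Lemma state_transfer n k : state (n + k%:Z) =2 mx_state n (transfer n k).
Proof.
elim: k => [|k IH] u i; first by rewrite addr0 mx_state1.
have -> : n + k.+1%:Z = n + k%:Z + 1 by lia.
by rewrite state_Lambda_step mx_state_Lambda /Lambda_step !IH.
Qed.

Lemma state_transfer_back n k : state (n - k%:Z) =2 mx_state n (transfer_back n k).
Proof.
elim: k => [|k IH] u i; first by rewrite subr0 mx_state1.
have step : n - k%:Z = n - k.+1%:Z + 1 by lia.
by rewrite state_Lambda_inv_step -step mx_state_Lambda_inv /Lambda_inv_step !IH.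
Qed.

Section Periodic.
Variable p : nat.
Hypothesis a_b_periodic : periodic p a b.

Lemma Lambda_periodic m : Lambda (m + p%:Z) = Lambda m.
Proof. by rewrite /Lambda; case: (a_b_periodic m) => -> ->. Qed.

Lemma Lambda_inv_periodic m : Lambda_inv (m + p%:Z) = Lambda_inv m.
Proof. by rewrite /Lambda_inv; case: (a_b_periodic m) => -> ->. Qed.

Lemma transfer_back_periodic n k : transfer_back (n + p%:Z) k = transfer_back n k.
Proof.
elim: k => //= k ->.
have -> : n + p%:Z - k.+1%:Z = n - k.+1%:Z + p%:Z by lia.
by rewrite Lambda_inv_periodic.
Qed.

Lemma transfer_back_adj n : transfer_back n p = \adj (transfer n p).
Proof.
have TV : transfer n p *m \adj (transfer n p) = 1%:M by rewrite mul_mx_adj det_transfer.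
rewrite -[transfer_back n p]mulmx1 -TV mulmxA -(transfer_back_periodic n p).
by rewrite transfer_backK mul1mx.
Qed.

Lemma mxtrace_transfer_shift n : \tr (transfer (n + 1) p) = \tr (transfer n p).
Proof.
have conj : transfer (n + 1) p = Lambda n *m transfer n p *m Lambda_inv n.
  by rewrite -(Lambda_periodic n) -[Lambda _ *m _]/(transfer n p.+1)
     transferSr -mulmxA Lambda_invR mulmx1.
by rewrite conj mxtrace_mulC mulmxA Lambda_invL mul1mx.
Qed.

Lemma mxtrace_transfer n : \tr (transfer n p) = discriminant p a b.
Proof.
have const := shift_invariant_const mxtrace_transfer_shift.
by rewrite /discriminant monodromyE const [in RHS]const.
Qed.

Lemma poly_apply_discriminant u n :
  pa (discriminant p a b) u n = u (n - p%:Z) + u (n + p%:Z).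
Proof.
have := add_adj_mx22 (transfer n p).
rewrite -transfer_back_adj mxtrace_transfer => sum_transfer.
have := state_transfer n p u 0; have := state_transfer_back n p u 0.
rewrite /state /= => -> ->.
by rewrite addrC -mx_stateD sum_transfer mx_state_scalar.
Qed.

End Periodic.

End Transfer.

Definition delta (R : realType) (m : int) : int -> R := fun n => if n == m then 1 else 0.

Lemma l2_delta (R : realType) m : l2 (delta R m).
Proof.
exists 1 => N.
suff -> : forall K (c : int), \sum_(i < K) delta R m (i%:Z - c) ^+ 2 =
    if (0 <= m + c) && (m + c < K%:Z) then 1 else 0 by case: ifP.
move=> K c; elim: K => [|K IH].
  by rewrite big_ord0; case: ifP => // /andP[]; lia.
rewrite big_ord_recr /= IH /delta.
case: (boolP (K%:Z - c == m)) => /eqP hit;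
case: (boolP ((0 <= m + c) && (m + c < K%:Z))) => /andP in_K;
case: (boolP ((0 <= m + c) && (m + c < K.+1%:Z))) => /andP in_K1;
rewrite ?expr1n ?expr0n ?addr0 ?add0r //=; exfalso; lia.
Qed.

Section JacobiDelta.
Variables (R : realType) (a b : int -> R).
Local Notation pa := (poly_apply a b).
Local Notation delta := (delta R).
Implicit Types (c m n : int) (P : {poly R}).

Lemma jac_powS k u : jac_pow a b k.+1 u = jac_apply a b (jac_pow a b k u).
Proof. by []. Qed.

Lemma jac_pow_delta_lt k m n : n < m - k%:Z -> jac_pow a b k (delta m) n = 0.
Proof.
elim: k n => [|k IH] n lt_n.
  by rewrite /= /delta; case: eqP => // e; lia.
by rewrite jac_powS /jac_apply !IH ?mulr0 ?addr0 //; lia.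
Qed.

Lemma jac_pow_delta_edge k c :
  jac_pow a b k (delta (c + k%:Z)) c = \prod_(j < k) a (c + j%:Z).
Proof.
elim: k c => [|k IH] c; first by rewrite big_ord0 /= /delta addr0 eqxx.
have [zero_pred zero_c] : jac_pow a b k (delta (c + k.+1%:Z)) (c - 1) = 0 /\
                          jac_pow a b k (delta (c + k.+1%:Z)) c = 0.
  by split; apply: jac_pow_delta_lt; lia.
rewrite jac_powS /jac_apply zero_pred zero_c !mulr0 !add0r.
have -> : c + k.+1%:Z = c + 1 + k%:Z by lia.
by rewrite IH big_window_recl.
Qed.

Lemma jac_pow_delta_edgeS k c : jac_pow a b k.+1 (delta (c + k%:Z)) c =
  \prod_(j < k) a (c + j%:Z) * \sum_(j < k.+1) b (c + j%:Z).
Proof.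
elim: k c => [|k IH] c.
  rewrite big_ord0 big_ord1 jac_powS /jac_apply /= /delta addr0 eqxx.
  have -> : (c - 1 == c) = false by apply/negbTE/eqP; lia.
  have -> : (c + 1 == c) = false by apply/negbTE/eqP; lia.
  by rewrite !mulr0 mulr1 add0r addr0 mul1r.
rewrite jac_powS /jac_apply (jac_pow_delta_lt (n := c - 1)); last by lia.
rewrite jac_pow_delta_edge.
have -> : c + k.+1%:Z = c + 1 + k%:Z by lia.
by rewrite IH !big_window_recl; ring.
Qed.

Lemma poly_apply_delta_edge P k c : (size P <= k.+1)%N ->
  pa P (delta (c + k%:Z)) c = P`_k * \prod_(j < k) a (c + j%:Z).
Proof.
move=> szP; rewrite (poly_apply_widen a b _ _ szP) big_ord_recr /= jac_pow_delta_edge.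
rewrite big1 ?add0r // => i _; rewrite jac_pow_delta_lt ?mulr0 //.
by have := ltn_ord i; lia.
Qed.

Lemma poly_apply_delta_edgeS P k c : (size P <= k.+2)%N ->
  pa P (delta (c + k%:Z)) c = P`_k * \prod_(j < k) a (c + j%:Z) +
    P`_k.+1 * (\prod_(j < k) a (c + j%:Z) * \sum_(j < k.+1) b (c + j%:Z)).
Proof.
move=> szP; rewrite (poly_apply_widen a b _ _ szP) big_ord_recr big_ord_recr.
rewrite jac_pow_delta_edgeS jac_pow_delta_edge /=.
rewrite big1 ?add0r // => i _; rewrite jac_pow_delta_lt ?mulr0 //.
by have := ltn_ord i; lia.
Qed.

Lemma poly_apply_deltas_eq0 P : (forall n, a n != 0) ->
  (forall m n, pa P (delta m) n = 0) -> P = 0.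
Proof.
move=> a_neq0 P_delta; apply/eqP/contraT => P_neq0.
have prod_neq0 : \prod_(j < (size P).-1) a (0 + j%:Z) != 0 by apply/prodf_neq0.
have := P_delta (0 + (size P).-1%:Z) 0.
rewrite poly_apply_delta_edge ?leqSpred // => /eqP.
by rewrite mulf_eq0 -lead_coefE lead_coef_eq0 (negbTE P_neq0) (negbTE prod_neq0).
Qed.

End JacobiDelta.

Section Converse.
Variables (R : realType) (a b : int -> R) (k : nat) (D : {poly R}).
Hypothesis a_neq0 : forall n, a n != 0.
Hypothesis size_D : (size D <= k.+2)%N.
Hypothesis D_delta : forall m n,
  poly_apply a b D (delta R m) n = delta R m (n - k.+1%:Z) + delta R m (n + k.+1%:Z).

Lemma lead_window c : D`_k.+1 * \prod_(j < k.+1) a (c + j%:Z) = 1.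
Proof.
rewrite -(poly_apply_delta_edge a b) // D_delta /delta eqxx.
by case: eqP => [|_]; [lia | rewrite add0r].
Qed.

Lemma sublead_window c : D`_k + D`_k.+1 * \sum_(j < k.+1) b (c + j%:Z) = 0.
Proof.
have prod_neq0 : \prod_(j < k) a (c + j%:Z) != 0 by apply/prodf_neq0 => j _.
apply: (mulfI prod_neq0); rewrite mulr0.
transitivity (poly_apply a b D (delta R (c + k%:Z)) c).
  by rewrite poly_apply_delta_edgeS //; ring.
have [ne_below ne_above] : c - k.+1%:Z != c + k%:Z /\ c + k.+1%:Z != c + k%:Z.
  by split; apply/eqP; lia.
by rewrite D_delta /delta (negbTE ne_below) (negbTE ne_above) addr0.
Qed.

Lemma periodic_of_delta : periodic k.+1 a b.
Proof.
have lead_neq0 : D`_k.+1 != 0.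
  by apply: contra_eqN (lead_window 0) => /eqP->; rewrite mul0r eq_sym oner_neq0.
move=> c; split; [apply: window_prod_periodic | apply: window_sum_periodic].
- exact: a_neq0.
- by apply: (mulfI lead_neq0); rewrite !lead_window.
- by apply: (mulfI lead_neq0); apply: (addrI D`_k); rewrite !sublead_window.
Qed.

Lemma discriminant_of_delta : discriminant k.+1 a b = D.
Proof.
apply/subr0_eq/(poly_apply_deltas_eq0 (b := b) a_neq0) => m n.
by rewrite poly_applyB poly_apply_discriminant ?D_delta ?subrr //; exact: periodic_of_delta.
Qed.

End Converse.

Theorem theorem3p1 (R : realType) (p : nat) (a0 b0 a b : int -> R) :
  (0 < p)%N -> jacobi a0 b0 -> periodic p a0 b0 -> jacobi a b ->
  ((forall u : int -> R, l2 u ->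
      poly_apply a b (discriminant p a0 b0) u =
      (fun n => shift_pow p%:Z u n + shift_pow (- p%:Z) u n))
   <-> iso_torus p a0 b0 a b).
Proof.
move=> p_gt0 _ _ jacobi_ab; have a_neq0 n : a n != 0 by rewrite lt0r_neq0 ?jacobi_ab.1.
split => [Delta_shift | [_ [ab_periodic disc_eq]] u _]; last first.
  apply: functional_extensionality => n.
  by rewrite -disc_eq poly_apply_discriminant // /shift_pow (opprK (p%:Z)).
case: p p_gt0 Delta_shift => // k _ Delta_shift.
have D_delta m n : poly_apply a b (discriminant k.+1 a0 b0) (delta R m) n =
    delta R m (n - k.+1%:Z) + delta R m (n + k.+1%:Z).
  by rewrite (Delta_shift _ (l2_delta R m)) /shift_pow (opprK (k.+1%:Z)).
have size_D := size_discriminant a0 b0 k.+1.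
split; [exact: jacobi_ab | split].
  exact: periodic_of_delta a_neq0 size_D D_delta.
exact: discriminant_of_delta a_neq0 size_D D_delta.
Qed.
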